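(* Let $G$ be a simple graph on vertex set $\{x_1,\dots,x_n\}$ and let $e=x_ix_j$ be an edge of $G$. Then $$\big(I(G)^{(2)}:e\big)=I(G)+\big(x_px_q: x_p\in N_G(x_i),\ x_q\in N_G(x_j),\ x_p\neq x_q\big)+\big(x_t: x_t\in N_G(x_i)\cap N_G(x_j)\big).$$
   Context: $S=\mathbb{K}[x_1,\dots,x_n]$ over a field $\mathbb{K}$; vertices of $G$ are identified with variables and edges with the corresponding quadratic monomials. $I(G)=(x_ix_j : x_ix_j\in E(G))$ is the edge ideal. $N_G(x_i)=\{x_j : x_ix_j\in E(G)\}$. With $\mathcal{C}(G)$ the set of minimal vertex covers of $G$ and $\mathfrak{p}_C$ the ideal generated by the variables in $C$, the symbolic power is $I(G)^{(s)}=\bigcap_{C\in\mathcal{C}(G)}\mathfrak{p}_C^s$. *)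

From HB Require Import structures.
From mathcomp Require Import all_boot all_order all_algebra.
Unset Printing Implicit Defensive.
Import GRing.Theory.
Local Open Scope ring_scope.

(* The polynomial ring K[x_0,...,x_{n-1}], built as iterated univariate
   polynomial rings: mpoly K 0 = K, mpoly K (n+1) = (mpoly K n)[x_n]. *)
Fixpoint mpoly (K : comNzRingType) (n : nat) : comNzRingType :=
  match n with
  | 0 => K
  | n'.+1 => ({poly mpoly K n'} : comNzRingType)
  end.

(* The variable x_i (for i < n) of mpoly K n; the value for i >= n is
   irrelevant (0). *)
Fixpoint mvar (K : comNzRingType) (n : nat) (i : nat) : mpoly K n :=
  match n return mpoly K n with
  | 0 => 0
  | n'.+1 => if i == n' then 'X else (mvar K n' i)%:P
  end.

Definition x (K : comNzRingType) {n : nat} (i : 'I_n) : mpoly K n := mvar K n i.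

(* Ideals are represented as predicates; the ideal generated by a
   (possibly infinite) set P of elements: finite R-linear combinations. *)
Definition ideal_gen {R : comNzRingType} (P : R -> Prop) : R -> Prop :=
  fun f => exists (k : nat) (a g : 'I_k -> R),
      (forall l, P (g l)) /\ f = \sum_(l < k) a l * g l.

Definition edge_ideal (K : comNzRingType) {n : nat} (E : rel 'I_n)
  : mpoly K n -> Prop :=
  ideal_gen (fun f => exists i j, E i j /\ f = x K i * x K j).

Definition vertex_cover {n : nat} (E : rel 'I_n) (C : {set 'I_n}) : Prop :=
  forall i j, E i j -> (i \in C) || (j \in C).

Definition minimal_vertex_cover {n : nat} (E : rel 'I_n) (C : {set 'I_n})
  : Prop :=
  vertex_cover E C /\ (forall D : {set 'I_n}, D \proper C -> ~ vertex_cover E D).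

(* p_C^s : the s-th power of the prime generated by the variables in C,
   generated by all products of s variables from C. *)
Definition prime_pow (K : comNzRingType) {n : nat} (C : {set 'I_n}) (s : nat)
  : mpoly K n -> Prop :=
  ideal_gen (fun f => exists t : s.-tuple 'I_n,
      (forall k, k \in t -> k \in C) /\ f = \prod_(k <- t) x K k).

(* Symbolic power I(G)^(s) = intersection over minimal vertex covers. *)
Definition symb_pow (K : comNzRingType) {n : nat} (E : rel 'I_n) (s : nat)
  : mpoly K n -> Prop :=
  fun f => forall C : {set 'I_n}, minimal_vertex_cover E C -> prime_pow K C s f.

Definition colon {R : comNzRingType} (I : R -> Prop) (g : R) : R -> Prop :=
  fun f => I (f * g).

From HB Require Import structures.
From mathcomp Require Import all_boot all_order all_algebra ring.
Set Implicit Arguments. Unset Strict Implicit. Unset Printing Implicit Defensive.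
Import GRing.Theory.
Local Open Scope ring_scope.

(* The inclusion from right to left is checked on generators: each generator g
   times x_i x_j is a product of two edge monomials, or x_t x_i x_j with t a common
   neighbour, and both kinds lie in p_C^2 for every vertex cover C.
   For the converse, expand f into monomials.  Those whose support contains the
   support of a generator lie in the right-hand side.  If the support S of x^e
   contains none, then S is independent and one of i, j has no neighbour in S;
   enlarging S by that vertex to a maximal independent set yields a minimal vertex
   cover C disjoint from S containing exactly one of i, j.  The monomial
   x^e x_i x_j has degree 1 in the variables of C, while every element of p_C^2
   only involves monomials of C-degree at least 2; so the coefficient of x^e in f
   vanishes. *)

Section Monomials.
Variable K : comNzRingType.

Fixpoint monomial (n : nat) (e : nat -> nat) : mpoly K n :=
  match n return mpoly K n with
  | 0 => 1
  | n'.+1 => (@monomial n' e)%:P * 'X^(e n')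
  end.

Fixpoint mcoef (n : nat) (e : nat -> nat) : mpoly K n -> K :=
  match n return mpoly K n -> K with
  | 0 => fun f => f
  | n'.+1 => fun f => @mcoef n' e ((f : {poly mpoly K n'})`_(e n'))
  end.

Fixpoint mconst (n : nat) (c : K) : mpoly K n :=
  match n return mpoly K n with
  | 0 => c
  | n'.+1 => (@mconst n' c)%:P
  end.

Fixpoint exp_le (n : nat) (a b : nat -> nat) : bool :=
  if n is n'.+1 then (a n' <= b n')%N && exp_le n' a b else true.
Fixpoint exp_eq (n : nat) (a b : nat -> nat) : bool :=
  if n is n'.+1 then (a n' == b n') && exp_eq n' a b else true.

Lemma exp_leP n a b : reflect (forall l, (l < n)%N -> (a l <= b l)%N) (exp_le n a b).
Proof.
elim: n => [|n IH] /=; first by constructor.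
apply: (iffP andP) => [[le_n /IH le_lt] l | le_all].
  by rewrite ltnS leq_eqVlt => /orP [/eqP-> //|]; apply: le_lt.
by split; [exact: le_all | apply/IH => l /ltnW; apply: le_all].
Qed.

Lemma exp_eqP n a b : reflect (forall l, (l < n)%N -> a l = b l) (exp_eq n a b).
Proof.
elim: n => [|n IH] /=; first by constructor.
apply: (iffP andP) => [[/eqP eq_n /IH eq_lt] l | eq_all].
  by rewrite ltnS leq_eqVlt => /orP [/eqP-> //|]; apply: eq_lt.
by split; [apply/eqP; exact: eq_all | apply/IH => l /ltnW; apply: eq_all].
Qed.

Lemma monomial_ext n e e' :
  (forall l, (l < n)%N -> e l = e' l) -> monomial n e = monomial n e'.
Proof.
elim: n => [//|n IH] eq_e /=.
by rewrite eq_e // IH // => l /ltnW; apply: eq_e.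
Qed.

Lemma mcoef_ext n e e' (f : mpoly K n) :
  (forall l, (l < n)%N -> e l = e' l) -> mcoef e f = mcoef e' f.
Proof.
elim: n e e' f => [//|n IH] e e' f eq_e /=.
by rewrite eq_e // (IH e e') // => l /ltnW; apply: eq_e.
Qed.

Lemma monomial0 n : monomial n (fun _ => 0%N) = 1.
Proof. by elim: n => [//|n IH] /=; rewrite IH expr0 mulr1. Qed.

Lemma monomialD n e1 e2 :
  monomial n (fun l => e1 l + e2 l)%N = monomial n e1 * monomial n e2.
Proof.
elim: n => [|n IH] /=; first by rewrite mulr1.
by rewrite IH polyCM exprD; ring.
Qed.

Definition unit_exp (k : nat) : nat -> nat := fun l => nat_of_bool (l == k).

Lemma mvar_monomial n k : (k < n)%N -> mvar K n k = monomial n (unit_exp k).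
Proof.
elim: n => [//|n IH] lt_kn /=; rewrite /unit_exp.
case: eqP => [->|ne_kn].
  by rewrite eqxx expr1 (@monomial_ext _ _ (fun _ => 0%N)) ?monomial0 ?mul1r //
     => l /ltn_eqF ->.
rewrite IH; last by rewrite ltn_neqAle -ltnS lt_kn andbT; apply/eqP.
by rewrite (introF eqP (nesym ne_kn)) expr0 mulr1.
Qed.

Lemma mcoefD n e (f g : mpoly K n) : mcoef e (f + g) = mcoef e f + mcoef e g.
Proof. by elim: n e f g => [//|n IH] e f g /=; rewrite coefD IH. Qed.

Lemma mcoef0 n e : mcoef e (0 : mpoly K n) = 0.
Proof. by elim: n => [//|n IH] /=; rewrite coef0 IH. Qed.

Lemma mcoef_sum n e I (s : seq I) (P : pred I) (F : I -> mpoly K n) :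
  mcoef e (\sum_(i <- s | P i) F i) = \sum_(i <- s | P i) mcoef e (F i).
Proof. exact: (big_morph _ (mcoefD e) (mcoef0 n e)). Qed.

Lemma mcoef_constM n e c (f : mpoly K n) : mcoef e (mconst n c * f) = c * mcoef e f.
Proof. by elim: n e f => [//|n IH] e f /=; rewrite coefCM IH. Qed.

Lemma mcoef_monomial n e e' : mcoef e (monomial n e') = if exp_eq n e e' then 1 else 0.
Proof.
elim: n => [//|n IH] /=.
rewrite coefCM coefXn eq_sym.
by case: eqP => _ /=; [rewrite mulr1 IH | rewrite mulr0 mcoef0].
Qed.

Lemma mcoef_mul_monomial n e d (f : mpoly K n) :
  mcoef e (f * monomial n d) =
  if exp_le n d e then mcoef (fun l => e l - d l)%N f else 0.
Proof.
elim: n e d f => [|n IH] e d f /=; first by rewrite mulr1.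
rewrite mulrA coefMXn.
by case: ltnP => _ /=; [rewrite mcoef0 | rewrite coefMC IH].
Qed.

Lemma mcoef_shift n e d (f : mpoly K n) :
  mcoef (fun l => e l + d l)%N (f * monomial n d) = mcoef e f.
Proof.
rewrite mcoef_mul_monomial; case: exp_leP => [_ | []]; last by move=> l _; apply: leq_addl.
by apply: mcoef_ext => l _; rewrite addnK.
Qed.

Lemma mcoef_eq0 n (f : mpoly K n) : (forall e, mcoef e f = 0) -> f = 0.
Proof.
elim: n f => [|n IH] f f0; first exact: (f0 (fun _ => 0%N)).
apply/polyP => k; rewrite coef0; apply: IH => e.
rewrite -(f0 (fun l => if l == n then k else e l)) /= eqxx.
by apply: mcoef_ext => l /ltn_eqF ->.
Qed.

Lemma monomial_expansion n (f : mpoly K n) :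
  exists s : seq ((nat -> nat) * K), f = \sum_(p <- s) mconst n p.2 * monomial n p.1.
Proof.
elim: n f => [|n IH] f.
  by exists [:: (fun _ => 0%N, f)]; rewrite big_seq1 /= mulr1.
rewrite -[f]coefK poly_def.
elim/big_rec: _ => [|k g _ [s ->]]; first by exists [::]; rewrite big_nil.
have [t ->] := IH f`_k.
exists ([seq ((fun l => if l == n then val k else p.1 l), p.2) | p <- t] ++ s).
rewrite big_cat big_map -mul_polyC rmorph_sum big_distrl /=; congr (_ + _).
apply: eq_bigr => p _; rewrite eqxx (@monomial_ext _ _ p.1) ?rmorphM ?mulrA //.
by move=> l /ltn_eqF ->.
Qed.

End Monomials.

Section IndependentSets.
Variables (n : nat) (E : rel 'I_n).
Hypotheses (Esym : symmetric E) (Eirr : irreflexive E).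

Definition independent (M : {set 'I_n}) : bool :=
  [forall a, forall b, [&& a \in M & b \in M] ==> ~~ E a b].

Lemma independentP (M : {set 'I_n}) :
  reflect (forall a b, a \in M -> b \in M -> ~~ E a b) (independent M).
Proof.
apply: (iffP forallP) => [indM a b aM bM | indM a].
  by have /forallP/(_ b) := indM a; rewrite aM bM.
by apply/forallP => b; apply/implyP => /andP [aM bM]; apply: indM.
Qed.

(* Every independent set extends to a maximal one (take one of largest size). *)
Lemma maximal_independent_ext (T : {set 'I_n}) : independent T ->
  exists M, [/\ independent M, T \subset M &
                forall c, c \notin M -> ~~ independent (c |: M)].
Proof.
move=> indT; have init : independent T && (T \subset T) by rewrite indT subxx.
have [M /andP [indM sTM] maxM] :=
  @arg_maxnP _ T (fun M => independent M && (T \subset M)) (fun M => #|M|) init.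
exists M; split => // c cM; apply/negP => indcM.
have := maxM (c |: M); rewrite indcM (subset_trans sTM (subsetUr _ _)) => /(_ isT).
by rewrite cardsU1 cM add1n /= ltnn.
Qed.

Lemma maximal_independent_compl (M : {set 'I_n}) : independent M ->
  (forall c, c \notin M -> ~~ independent (c |: M)) ->
  minimal_vertex_cover E (~: M).
Proof.
move=> /independentP indM maxM; split.
  move=> a b Eab; rewrite !in_setC -negb_and; apply/negP => /andP [aM bM].
  by have := indM a b aM bM; rewrite Eab.
move=> D /properP [sDM [c cM cD]] coverD.
rewrite in_setC in cM.
have notD y : y \in M -> y \notin D.
  by move=> yM; apply/negP => /(subsetP sDM); rewrite in_setC yM.
move/negP: (maxM c cM); apply; apply/independentP => a b.
rewrite !in_setU1 => aS bS; apply/negP => Eab.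
move: Eab (coverD a b Eab).
case/orP: aS => [/eqP-> | aM]; case/orP: bS => [/eqP-> | bM].
- by rewrite Eirr.
- by rewrite (negbTE cD) (negbTE (notD _ bM)).
- by rewrite (negbTE cD) (negbTE (notD _ aM)).
- by move=> Eab; have := indM a b aM bM; rewrite Eab.
Qed.

Lemma independent_avoids_cover (T : {set 'I_n}) : independent T ->
  exists C, minimal_vertex_cover E C /\ [disjoint T & C].
Proof.
move=> /maximal_independent_ext [M [indM sTM maxM]].
exists (~: M); split; first exact: maximal_independent_compl.
by rewrite disjoints_subset setCK.
Qed.

Lemma cover_omitting (S : {set 'I_n}) v w : independent S -> E v w ->
  (forall k, k \in S -> ~~ E v k) ->
  exists C, [/\ minimal_vertex_cover E C, [disjoint S & C], v \notin C & w \in C].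
Proof.
move=> /independentP indS Evw nbr_v.
have indvS : independent (v |: S).
  apply/independentP => a b; rewrite !in_setU1.
  case/orP => [/eqP-> | aS]; case/orP => [/eqP-> | bS].
  - by rewrite Eirr.
  - exact: nbr_v.
  - by rewrite Esym; apply: nbr_v.
  - exact: indS.
have [C [mvcC disC]] := independent_avoids_cover indvS.
have vNC : v \notin C by rewrite (disjointFr disC (setU11 v S)).
exists C; split => //; first exact: disjointWl (subsetUr _ _) disC.
by have := proj1 mvcC v w Evw; rewrite (negbTE vNC).
Qed.

End IndependentSets.

Section GeneratedIdeals.
Variables (R : comNzRingType) (P : R -> Prop).

Lemma ideal_gen0 : ideal_gen P 0.
Proof. by exists 0%N, (fun _ => 0), (fun _ => 0); split => [[]//|]; rewrite big_ord0. Qed.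

Lemma ideal_genD f g : ideal_gen P f -> ideal_gen P g -> ideal_gen P (f + g).
Proof.
move=> [k1 [a1 [g1 [P1 ->]]]] [k2 [a2 [g2 [P2 ->]]]].
pose glue (h1 : 'I_k1 -> R) (h2 : 'I_k2 -> R) (l : 'I_(k1 + k2)) :=
  match split l with inl l1 => h1 l1 | inr l2 => h2 l2 end.
exists (k1 + k2)%N, (glue a1 a2), (glue g1 g2); split.
  by move=> l; rewrite /glue; case: split.
rewrite big_split_ord; congr (_ + _); apply: eq_bigr => l _.
  by rewrite /glue (unsplitK (inl l)).
by rewrite /glue (unsplitK (inr l)).
Qed.

Lemma ideal_genMl c f : ideal_gen P f -> ideal_gen P (c * f).
Proof.
move=> [k [a [g [Pg ->]]]]; exists k, (fun l => c * a l), g; split => //.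
by rewrite big_distrr /=; apply: eq_bigr => l _; rewrite mulrA.
Qed.

Lemma ideal_genB f g : ideal_gen P f -> ideal_gen P g -> ideal_gen P (f - g).
Proof. by move=> If Ig; rewrite -mulN1r; apply: ideal_genD => //; apply: ideal_genMl. Qed.

Lemma ideal_gen_gen c g : P g -> ideal_gen P (c * g).
Proof. by move=> Pg; exists 1%N, (fun _ => c), (fun _ => g); rewrite big_ord1. Qed.

Lemma ideal_gen_sum I (s : seq I) (Q : pred I) (F : I -> R) :
  (forall i, Q i -> ideal_gen P (F i)) -> ideal_gen P (\sum_(i <- s | Q i) F i).
Proof. by move=> IF; apply: big_ind => //; [exact: ideal_gen0 | exact: ideal_genD]. Qed.

End GeneratedIdeals.

Lemma ideal_gen_mulr_sub (R : comNzRingType) (P Q : R -> Prop) h f :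
  (forall g, P g -> ideal_gen Q (g * h)) -> ideal_gen P f -> ideal_gen Q (f * h).
Proof.
move=> PQ [k [a [g [Pg ->]]]]; rewrite big_distrl /=.
by apply: ideal_gen_sum => l _; rewrite -mulrA; apply/ideal_genMl/PQ.
Qed.

Section PrimePowers.
Variables (K : comNzRingType) (n : nat).

Lemma x_monomial (k : 'I_n) : x K k = monomial K n (unit_exp k).
Proof. exact: mvar_monomial. Qed.

Definition seq_exp (t : seq 'I_n) : nat -> nat := fun l => \sum_(k <- t) unit_exp k l.

Lemma prod_x_monomial (t : seq 'I_n) : \prod_(k <- t) x K k = monomial K n (seq_exp t).
Proof.
elim: t => [|k t IH].
  by rewrite big_nil -(monomial0 K n); apply: monomial_ext => l _; rewrite /seq_exp big_nil.
rewrite big_cons IH x_monomial -monomialD.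
by apply: monomial_ext => l _; rewrite /seq_exp big_cons.
Qed.

Definition degree_in (C : {set 'I_n}) (e : nat -> nat) : nat := \sum_(k in C) e k.

Lemma degree_in_le C a b : exp_le n a b -> (degree_in C a <= degree_in C b)%N.
Proof. by move=> /exp_leP le_ab; apply: leq_sum => k _; apply: le_ab. Qed.

Lemma degree_inD C a b :
  degree_in C (fun l => a l + b l)%N = (degree_in C a + degree_in C b)%N.
Proof. exact: big_split. Qed.

Lemma degree_in_unit C (u : 'I_n) : degree_in C (unit_exp u) = (u \in C).
Proof.
rewrite /degree_in /unit_exp; have [uC | uNC] := boolP (u \in C).
  rewrite (bigD1 u) //= eqxx big1 // => k /andP [_ neq_ku].
  by case: eqP => // /val_inj eq_ku; rewrite eq_ku eqxx in neq_ku.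
by rewrite big1 // => k kC; case: eqP => // /val_inj eq_ku; rewrite -eq_ku kC in uNC.
Qed.

Lemma degree_in_seq_exp C (t : seq 'I_n) : degree_in C (seq_exp t) = count (mem C) t.
Proof.
elim: t => [|k t IH]; first by apply: big1 => l _; rewrite /seq_exp big_nil.
rewrite /= -IH -degree_in_unit -degree_inD.
by apply: eq_bigr => l _; rewrite /seq_exp big_cons.
Qed.

Lemma mcoef_prime_pow (C : {set 'I_n}) s g e :
  prime_pow K C s g -> (degree_in C e < s)%N -> mcoef e g = 0.
Proof.
move=> [k [a [gen [Pgen ->]]]] lt_e_s; rewrite mcoef_sum; apply: big1 => l _.
have [t [tC ->]] := Pgen l.
rewrite prod_x_monomial mcoef_mul_monomial; case: ifP => // /(degree_in_le C).
have -> : degree_in C (seq_exp t) = s.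
  rewrite degree_in_seq_exp -[RHS](size_tuple t) -count_predT.
  by apply: eq_in_count => u /tC.
by rewrite leqNgt lt_e_s.
Qed.

Lemma prime_pow2_mem (C : {set 'I_n}) u v h :
  u \in C -> v \in C -> prime_pow K C 2 (h * (x K u * x K v)).
Proof.
move=> uC vC; apply: ideal_gen_gen; exists [tuple u; v].
split; last by rewrite big_cons big_cons big_nil mulr1.
by move=> k; rewrite !inE => /orP [] /eqP ->.
Qed.

Lemma cover_edge_factor (E : rel 'I_n) (C : {set 'I_n}) a b :
  vertex_cover E C -> E a b -> exists u w, u \in C /\ x K a * x K b = x K u * x K w.
Proof.
move=> coverC /coverC /orP [aC | bC]; first by exists a, b.
by exists b, a; rewrite mulrC.
Qed.

Lemma cover_two_edges (E : rel 'I_n) (C : {set 'I_n}) a b c d h :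
  vertex_cover E C -> E a b -> E c d ->
  prime_pow K C 2 (h * (x K a * x K b) * (x K c * x K d)).
Proof.
move=> coverC /(cover_edge_factor coverC) [u [w [uC ->]]].
move=> /(cover_edge_factor coverC) [u' [w' [u'C ->]]].
have -> : h * (x K u * x K w) * (x K u' * x K w') = h * x K w * x K w' * (x K u * x K u').
  by ring.
exact: prime_pow2_mem.
Qed.

End PrimePowers.

Section Supports.
Variables (K : comNzRingType) (n : nat).

Definition supp (e : nat -> nat) : {set 'I_n} := [set k : 'I_n | (0 < e k)%N].

Lemma supp_exp_eq e e' : exp_eq n e e' -> supp e = supp e'.
Proof. by move=> /exp_eqP eq_e; apply/setP => k; rewrite !inE eq_e. Qed.

Lemma monomial_factor e (k : 'I_n) : k \in supp e ->
  monomial K n e = monomial K n (fun l => e l - unit_exp k l)%N * x K k.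
Proof.
rewrite inE => ek; rewrite x_monomial -monomialD; apply: monomial_ext => l _.
by rewrite subnK // /unit_exp; case: (l =P k) => [->|].
Qed.

Lemma monomial_factor2 e (a b : 'I_n) : a != b -> a \in supp e -> b \in supp e ->
  exists e', monomial K n e = monomial K n e' * (x K a * x K b).
Proof.
move=> neq_ab aS bS; rewrite (monomial_factor aS) (@monomial_factor _ b).
  by eexists; rewrite -mulrA [x K b * _]mulrC.
rewrite /supp !inE /unit_exp in bS *.
case: (b =P a :> nat) => [/val_inj eq_ba|]; last by rewrite subn0.
by rewrite eq_ba eqxx in neq_ab.
Qed.

End Supports.
Arguments supp {n} e.

Section EdgeColon.
Variables (K : comNzRingType) (n : nat) (E : rel 'I_n).
Hypotheses (Esym : symmetric E) (Eirr : irreflexive E).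
Variables (i j : 'I_n).
Hypothesis Eij : E i j.

Definition colon_gens (g : mpoly K n) : Prop :=
     (exists a b, E a b /\ g = x K a * x K b)
  \/ (exists p q, E i p /\ E j q /\ p != q /\ g = x K p * x K q)
  \/ (exists t, E i t /\ E j t /\ g = x K t).

Lemma colon_gens_mul (C : {set 'I_n}) g : vertex_cover E C -> colon_gens g ->
  prime_pow K C 2 (g * (x K i * x K j)).
Proof.
move=> coverC [[a [b [Eab ->]]] | [[p [q [Eip [Ejq [_ ->]]]]] | [t [Eit [Ejt ->]]]]].
- by rewrite -[x K a * _]mul1r; exact: cover_two_edges coverC Eab Eij.
- have -> : x K p * x K q * (x K i * x K j) = 1 * (x K i * x K p) * (x K j * x K q).
    by ring.
  exact: cover_two_edges coverC (_ : E i p) Ejq.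
- have [tC | tNC] := boolP (t \in C).
    have [u [w [uC ->]]] := cover_edge_factor K coverC Eij.
    have -> : x K t * (x K u * x K w) = x K w * (x K t * x K u) by ring.
    exact: prime_pow2_mem.
  have iC : i \in C by have := coverC _ _ Eit; rewrite (negbTE tNC) orbF.
  have jC : j \in C by have := coverC _ _ Ejt; rewrite (negbTE tNC) orbF.
  exact: prime_pow2_mem.
Qed.

Lemma colon_sub f : ideal_gen colon_gens f -> symb_pow K E 2 (f * (x K i * x K j)).
Proof. by move=> If C [coverC _]; apply: ideal_gen_mulr_sub If => g; apply: colon_gens_mul. Qed.

Definition supports_gen (S : {set 'I_n}) : bool :=
     [exists a, exists b, [&& E a b, a \in S & b \in S]]
  || [exists p, exists q, [&& E i p, E j q, p != q, p \in S & q \in S]]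
  || [exists t, [&& E i t, E j t & t \in S]].

Lemma supports_gen_mem e c : supports_gen (supp e) ->
  ideal_gen colon_gens (mconst n c * monomial K n e).
Proof.
case/orP => [/orP [] | ].
- case/existsP => a /existsP [b /and3P [Eab aS bS]].
  have neq_ab : a != b by apply: contraTneq Eab => ->; rewrite Eirr.
  have [e' ->] := monomial_factor2 K neq_ab aS bS.
  by rewrite mulrA; apply: ideal_gen_gen; left; exists a, b.
- case/existsP => p /existsP [q /and5P [Eip Ejq neq_pq pS qS]].
  have [e' ->] := monomial_factor2 K neq_pq pS qS.
  by rewrite mulrA; apply: ideal_gen_gen; right; left; exists p, q.
- case/existsP => t /and3P [Eit Ejt tS].
  by rewrite (monomial_factor K tS) mulrA; apply: ideal_gen_gen; right; right; exists t.
Qed.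

Lemma unsupported_cover (S : {set 'I_n}) : ~~ supports_gen S ->
  exists C, [/\ minimal_vertex_cover E C, [disjoint S & C] & (i \in C) != (j \in C)].
Proof.
rewrite !negb_or => /andP [/andP [no_edge no_pq] no_t].
have Eji : E j i by rewrite Esym.
have indS : independent E S.
  apply/independentP => a b aS bS; apply: contra no_edge => Eab.
  by apply/existsP; exists a; apply/existsP; exists b; rewrite Eab aS bS.
have [[p /andP [pS Eip]] | no_nbr_i] := altP (@existsP _ (fun k => (k \in S) && E i k)).
  have [[q /andP [qS Ejq]] | no_nbr_j] := altP (@existsP _ (fun k => (k \in S) && E j k)).
    have [eq_pq | neq_pq] := eqVneq p q.
      by move/existsP: no_t; case; exists p; rewrite Eip pS eq_pq Ejq.
    move/existsP: no_pq; case; exists p; apply/existsP; exists q.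
    by rewrite Eip Ejq neq_pq pS qS.
  have nbr_j k : k \in S -> ~~ E j k.
    by move=> kS; apply/negP => Ejk; case/negP: no_nbr_j; apply/existsP; exists k; rewrite kS Ejk.
  have [C [mvcC disC jNC iC]] := cover_omitting Esym Eirr indS Eji nbr_j.
  by exists C; rewrite iC (negbTE jNC).
have nbr_i k : k \in S -> ~~ E i k.
  by move=> kS; apply/negP => Eik; case/negP: no_nbr_i; apply/existsP; exists k; rewrite kS Eik.
have [C [mvcC disC iNC jC]] := cover_omitting Esym Eirr indS Eij nbr_i.
by exists C; rewrite jC (negbTE iNC).
Qed.

(* Key step: if g x_i x_j lies in I(G)^(2), the coefficient of x^e in g vanishes
   whenever supp e contains the support of no generator, since x^e x_i x_j has
   degree 1 in the variables of the cover found above. *)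
Lemma mcoef_colon_vanish g e : symb_pow K E 2 (g * (x K i * x K j)) ->
  ~~ supports_gen (supp e) -> mcoef e g = 0.
Proof.
move=> symb_g /unsupported_cover [C [mvcC disC one_ij]].
rewrite -(mcoef_shift e (fun l => unit_exp i l + unit_exp j l)%N g) monomialD -!x_monomial.
apply: (mcoef_prime_pow (symb_g C mvcC)).
rewrite !degree_inD !degree_in_unit.
have -> : degree_in C e = 0%N.
  by apply: big1 => k kC; have := disjointFl disC kC; rewrite inE lt0n => /negbFE /eqP.
by case: (i \in C) (j \in C) one_ij => [] [].
Qed.

(* The inclusion "(I(G)^(2) : x_i x_j) \subset right-hand side": split f into
   its monomials supporting a generator, which lie in the right-hand side, and
   the others, whose coefficients all vanish by the key step. *)
Lemma colon_super f : symb_pow K E 2 (f * (x K i * x K j)) -> ideal_gen colon_gens f.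
Proof.
move=> symb_f; have [s def_f] := monomial_expansion f.
pose good (p : (nat -> nat) * K) := supports_gen (supp p.1).
pose fg := \sum_(p <- s | good p) mconst n p.2 * monomial K n p.1.
pose fb := \sum_(p <- s | ~~ good p) mconst n p.2 * monomial K n p.1.
have split_f : f = fg + fb by rewrite def_f (bigID good).
have Ifg : ideal_gen colon_gens fg by apply: ideal_gen_sum => p; apply: supports_gen_mem.
suff fb0 : fb = 0 by rewrite split_f fb0 addr0.
have symb_fb : symb_pow K E 2 (fb * (x K i * x K j)).
  move=> C mvcC.
  have -> : fb * (x K i * x K j) = f * (x K i * x K j) - fg * (x K i * x K j).
    by rewrite split_f; ring.
  by apply: ideal_genB; [apply: symb_f | apply: colon_sub].
apply: mcoef_eq0 => e; have [good_e | bad_e] := boolP (supports_gen (supp e)).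
  rewrite mcoef_sum big1 // => p bad_p; rewrite mcoef_constM mcoef_monomial.
  case: ifP => [/supp_exp_eq eq_supp | _]; last by rewrite mulr0.
  by rewrite /good -eq_supp good_e in bad_p.
exact: mcoef_colon_vanish.
Qed.

End EdgeColon.

Unset Implicit Arguments.

Theorem lemma3p2 (K : fieldType) (n : nat) (E : rel 'I_n)
  (Esym : symmetric E) (Eirr : irreflexive E) (i j : 'I_n) (Eij : E i j) :
  forall f : mpoly K n,
    colon (symb_pow K E 2) (x K i * x K j) f <->
    ideal_gen (fun g =>
         (exists a b, E a b /\ g = x K a * x K b)
      \/ (exists p q, E i p /\ E j q /\ p != q /\ g = x K p * x K q)
      \/ (exists t, E i t /\ E j t /\ g = x K t)) f.
Proof.
move=> f; split.
- exact: (colon_super Esym Eirr Eij).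
- exact: colon_sub.
Qed.
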